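(* Let $P,Q,R\in\mathbb P_d$, and let $U_P:=\operatorname{Pol}(P^{1/2}R^{1/2})$ and $U_Q:=\operatorname{Pol}(Q^{1/2}R^{1/2})$. Then $$\operatorname{B}_R(P,Q)=\big\|U_P^*P^{1/2}-U_Q^*Q^{1/2}\big\|_2^2,$$ where $\|A\|_2=\sqrt{\operatorname{Tr}[A^*A]}$ is the Frobenius norm.
   Context: $\mathbb P_d$ is the set of $d\times d$ complex positive definite matrices. For an invertible matrix $A$, $\operatorname{Pol}(A):=A(A^*A)^{-1/2}$ is the unitary polar factor. The generalized fidelity is $\operatorname{F}_R(P,Q):=\operatorname{Tr}\big[\sqrt{R^{1/2}PR^{1/2}}\,R^{-1}\sqrt{R^{1/2}QR^{1/2}}\big]$ and the squared generalized Bures distance is $\operatorname{B}_R(P,Q):=\operatorname{Tr}[P+Q]-2\,\mathrm{Re}\,\operatorname{F}_R(P,Q)$. *)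

From mathcomp Require Import all_boot all_algebra.
From mathcomp Require Import complex reals.
From Stdlib Require Import ClassicalEpsilon.

Set Implicit Arguments.
Unset Strict Implicit.
Unset Printing Implicit Defensive.

Import GRing.Theory Num.Theory.
Local Open Scope ring_scope.

Section Defs.
Variable C : numClosedFieldType.

Definition adjmx m n (A : 'M[C]_(m, n)) : 'M[C]_(n, m) := map_mx Num.conj A^T.

Definition posdefmx n (A : 'M[C]_n) : Prop :=
  adjmx A = A /\ forall x : 'cV[C]_n, x != 0 -> 0 < (adjmx x *m A *m x) 0 0.

Definition psdmx n (A : 'M[C]_n) : Prop :=
  adjmx A = A /\ forall x : 'cV[C]_n, 0 <= (adjmx x *m A *m x) 0 0.

Definition sqrtmx n (A : 'M[C]_n) : 'M[C]_n :=
  epsilon (inhabits 0) (fun B : 'M[C]_n => psdmx B /\ B *m B = A).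

Definition polmx n (A : 'M[C]_n) : 'M[C]_n :=
  A *m invmx (sqrtmx (adjmx A *m A)).

Definition gfid n (R P Q : 'M[C]_n) : C :=
  \tr (sqrtmx (sqrtmx R *m P *m sqrtmx R) *m invmx R
       *m sqrtmx (sqrtmx R *m Q *m sqrtmx R)).

Definition gbures n (R P Q : 'M[C]_n) : C :=
  \tr (P + Q) - 2 * 'Re (gfid R P Q).

Definition frobnorm m n (A : 'M[C]_(m, n)) : C := sqrtC (\tr (adjmx A *m A)).

End Defs.

(* With T := R^{1/2} and N_X := (T X T)^{1/2}, the polar factor of X^{1/2} T is
   X^{1/2} T N_X^{-1}, hence U_X^* X^{1/2} = N_X^{-1} T X = N_X T^{-1}.  The squared
   Frobenius norm of (N_P - N_Q) T^{-1} expands, by cyclicity of the trace, into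
   Tr[R^{-1} N_P^2] + Tr[R^{-1} N_Q^2] - 2 Re Tr[N_P R^{-1} N_Q], and
   Tr[R^{-1} N_X^2] = Tr[X]. *)

From mathcomp Require Import all_boot all_order all_algebra.
From mathcomp Require Import complex reals.
From Stdlib Require Import ClassicalEpsilon.
From mathcomp Require Import ring.

Set Implicit Arguments.
Unset Strict Implicit.
Unset Printing Implicit Defensive.
Import Order.TTheory GRing.Theory Num.Theory.
Local Open Scope ring_scope.

Lemma invmxM (R : comUnitRingType) n (A B : 'M[R]_n) :
  A \in unitmx -> B \in unitmx -> invmx (A *m B) = invmx B *m invmx A.
Proof.
move=> uA uB; have uAB : A *m B \in unitmx by rewrite unitmx_mul uA.
rewrite -[RHS](mulmxK uAB) mulmxA -[_ *m invmx A *m A]mulmxA mulVmx // mulmx1.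
by rewrite mulVmx // mul1mx.
Qed.

Section Adjoint.
Variable C : numClosedFieldType.

Lemma adjmxM m n p (A : 'M[C]_(m, n)) (B : 'M[C]_(n, p)) :
  adjmx (A *m B) = adjmx B *m adjmx A.
Proof. by rewrite /adjmx trmx_mul map_mxM. Qed.

Lemma adjmxK m n (A : 'M[C]_(m, n)) : adjmx (adjmx A) = A.
Proof. exact: trmxCK. Qed.

Lemma adjmxB m n (A B : 'M[C]_(m, n)) : adjmx (A - B) = adjmx A - adjmx B.
Proof. by rewrite /adjmx raddfB /= map_mxB. Qed.

Lemma adjmxV n (A : 'M[C]_n) : adjmx (invmx A) = invmx (adjmx A).
Proof. by rewrite /adjmx trmx_inv map_invmx. Qed.

Lemma mxtrace_adjmx n (A : 'M[C]_n) : \tr (adjmx A) = (\tr A)^*.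
Proof. by rewrite /adjmx trace_map_mx mxtrace_tr. Qed.

Lemma adjmx_delta n (i : 'I_n) : adjmx (delta_mx i 0 : 'cV[C]_n) = delta_mx 0 i.
Proof. by rewrite /adjmx trmx_delta map_delta_mx. Qed.

End Adjoint.

Section PositiveMatrices.
Variable C : numClosedFieldType.
Implicit Types n : nat.

Lemma psdmx_congr n m (A : 'M[C]_n) (B : 'M[C]_(n, m)) :
  psdmx A -> psdmx (adjmx B *m A *m B).
Proof.
move=> [hA pA]; split; first by rewrite !adjmxM adjmxK hA mulmxA.
by move=> x; have := pA (B *m x); rewrite adjmxM !mulmxA.
Qed.

Lemma psdmx_diag n (s : 'rV[C]_n) : (forall j, 0 <= s 0 j) -> psdmx (diag_mx s).
Proof.
move=> s_ge0; split.
  rewrite /adjmx tr_diag_mx map_diag_mx; congr diag_mx.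
  by apply/rowP => j; rewrite !mxE; apply: geC0_conj.
move=> x; rewrite -mulmxA mul_diag_mx !mxE; apply: sumr_ge0 => j _.
by rewrite !mxE mulrCA mulr_ge0 // mulrC mul_conjC_ge0.
Qed.

Lemma psdmx_diag_ge0 n (s : 'rV[C]_n) j : psdmx (diag_mx s) -> 0 <= s 0 j.
Proof.
case=> _ /(_ (delta_mx j 0)).
by rewrite adjmx_delta -mulmxA mul_diag_mx -rowE !mxE eqxx mulr1n mulr1.
Qed.

Lemma posdef_psd n (A : 'M[C]_n) : posdefmx A -> psdmx A.
Proof.
move=> [hA pA]; split=> // x; have [->|nz] := eqVneq x 0.
  by rewrite mulmx0 mxE.
exact: ltW (pA x nz).
Qed.

Lemma posdef_unitmx n (A : 'M[C]_n) : posdefmx A -> A \in unitmx.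
Proof.
move=> [_ pA]; rewrite -row_free_unit -kermx_eq0; apply/negPn/negP => nzK.
have [i nzi] : exists i, row i (kermx A) != 0.
  apply/not_all_not_ex => H; move/eqP: nzK; apply; apply/row_matrixP => i.
  by rewrite row0; move: (H i); case: (row i (kermx A) =P 0).
suff /pA : adjmx (row i (kermx A)) != 0.
  by rewrite adjmxK -row_mul mulmx_ker row0 mul0mx mxE ltxx.
apply: contra nzi => /eqP e; apply/eqP.
by rewrite -[row _ _]adjmxK e /adjmx trmx0 map_mx0.
Qed.

(* The spectral theorem [A = U^* diag(d) U] with [U] unitary; the psd root is
   [U^* diag(sqrt d) U]. *)
Lemma psdmx_sqrt_exists n (A : 'M[C]_n) :
  psdmx A -> exists B, psdmx B /\ B *m B = A.
Proof.
move=> pA; have [hA _] := pA.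
have hermA : A \is hermsymmx.
  by apply/is_hermitianmxP; rewrite expr0 scale1r; exact: esym hA.
have /orthomx_spectralP eA := hermitian_normalmx hermA.
set U := spectralmx A in eA; set d := spectral_diag A in eA.
have U'_U : invmx U = adjmx U by rewrite invmx_unitary // spectral_unitarymx.
have U_U' : U *m adjmx U = 1%:M by rewrite -U'_U mulmxV // spectral_unit.
rewrite U'_U in eA.
have d_ge0 j : 0 <= d 0 j.
  apply: psdmx_diag_ge0; have := psdmx_congr (adjmx U) pA.
  by rewrite adjmxK eA !mulmxA U_U' mul1mx -mulmxA U_U' mulmx1.
pose s := \row_j sqrtC (d 0 j).
exists (adjmx U *m diag_mx s *m U); split.
  by apply: psdmx_congr; apply: psdmx_diag => j; rewrite mxE sqrtC_ge0.
rewrite !mulmxA -[_ *m U *m adjmx U]mulmxA U_U' mulmx1 -[_ *m diag_mx s *m diag_mx s]mulmxA.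
rewrite mulmx_diag eA.
by congr (_ *m diag_mx _ *m _); apply/rowP => j; rewrite !mxE -expr2 sqrtCK.
Qed.

Lemma sqrtmx_spec n (A : 'M[C]_n) :
  psdmx A -> psdmx (sqrtmx A) /\ sqrtmx A *m sqrtmx A = A.
Proof. by move=> /psdmx_sqrt_exists; apply: epsilon_spec. Qed.

Lemma adjmx_sqrtmx n (A : 'M[C]_n) : psdmx A -> adjmx (sqrtmx A) = sqrtmx A.
Proof. by case/sqrtmx_spec => [[]]. Qed.

Lemma sqrtmxK n (A : 'M[C]_n) : psdmx A -> sqrtmx A *m sqrtmx A = A.
Proof. by case/sqrtmx_spec. Qed.

Lemma sqrtmx_unitmx n (A : 'M[C]_n) :
  psdmx A -> A \in unitmx -> sqrtmx A \in unitmx.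
Proof. by move=> pA; rewrite -{1}(sqrtmxK pA) unitmx_mul => /andP[]. Qed.

Lemma psdmx_adjmx_mul m n (A : 'M[C]_(m, n)) : psdmx (adjmx A *m A).
Proof.
have /(psdmx_congr A) : psdmx (diag_mx (const_mx 1 : 'rV[C]_m)).
  by apply: psdmx_diag => j; rewrite mxE.
by rewrite diag_const_mx mulmx1.
Qed.

Lemma adjmx_polmx n (A : 'M[C]_n) :
  adjmx (polmx A) = invmx (sqrtmx (adjmx A *m A)) *m adjmx A.
Proof. by rewrite /polmx adjmxM adjmxV (adjmx_sqrtmx (psdmx_adjmx_mul A)). Qed.

End PositiveMatrices.

Section Bures.
Variables (C : numClosedFieldType) (n : nat) (R : 'M[C]_n).
Hypothesis pR : posdefmx R.

Let T := sqrtmx R.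
Let N (X : 'M[C]_n) := sqrtmx (T *m X *m T).

Let hT : adjmx T = T. Proof. exact/adjmx_sqrtmx/posdef_psd. Qed.
Let TT : T *m T = R. Proof. exact/sqrtmxK/posdef_psd. Qed.
Let T_unit : T \in unitmx.
Proof. by apply: sqrtmx_unitmx; [apply: posdef_psd | apply: posdef_unitmx]. Qed.

Section OneMatrix.
Variable X : 'M[C]_n.
Hypothesis pX : posdefmx X.

Let psdTXT : psdmx (T *m X *m T).
Proof. by have := psdmx_congr T (posdef_psd pX); rewrite hT. Qed.

Lemma adjmx_sqrtmx_congr : adjmx (N X) = N X.
Proof. exact: adjmx_sqrtmx. Qed.

Lemma sqrtmx_congrK : N X *m N X = T *m X *m T.
Proof. exact: sqrtmxK. Qed.

Lemma adjmx_polmx_mul_sqrtmx :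
  adjmx (polmx (sqrtmx X *m T)) *m sqrtmx X = N X *m invmx T.
Proof.
have [hS SS] : adjmx (sqrtmx X) = sqrtmx X /\ sqrtmx X *m sqrtmx X = X.
  by split; [apply: adjmx_sqrtmx | apply: sqrtmxK]; apply: posdef_psd.
have N_unit : N X \in unitmx.
  by apply: sqrtmx_unitmx psdTXT _; rewrite !unitmx_mul T_unit posdef_unitmx.
rewrite adjmx_polmx.
have -> : adjmx (sqrtmx X *m T) *m (sqrtmx X *m T) = T *m X *m T.
  by rewrite adjmxM hS hT !mulmxA -[T *m _ *m _]mulmxA SS.
rewrite adjmxM hS hT -/(N X) -!mulmxA SS.
apply: (canRL (mulmxK T_unit)).
by rewrite -mulmxA -sqrtmx_congrK mulKmx.
Qed.

Lemma mxtrace_sqrtmx_congr : \tr (invmx T *m N X *m (N X *m invmx T)) = \tr X.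
Proof.
by rewrite mulmxA -[_ *m N X *m N X]mulmxA sqrtmx_congrK !mulmxA mulVmx // mul1mx mulmxK.
Qed.

End OneMatrix.

Lemma mxtrace_invsqrtmx_mul (M K : 'M[C]_n) :
  \tr (invmx T *m M *m (K *m invmx T)) = \tr (K *m invmx R *m M).
Proof. by rewrite -TT invmxM // mxtrace_mulC !mulmxA. Qed.

Lemma gbures_frobnorm (P Q : 'M[C]_n) : posdefmx P -> posdefmx Q ->
  gbures R P Q = frobnorm (adjmx (polmx (sqrtmx P *m T)) *m sqrtmx P
     - adjmx (polmx (sqrtmx Q *m T)) *m sqrtmx Q) ^+ 2.
Proof.
move=> pP pQ.
rewrite !adjmx_polmx_mul_sqrtmx // /frobnorm sqrtCK /gbures /gfid -/T -/(N P) -/(N Q).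
have hiT : adjmx (invmx T) = invmx T by rewrite adjmxV hT.
rewrite adjmxB !adjmxM hiT !adjmx_sqrtmx_congr //.
rewrite mulmxBl !mulmxBr !linearB /= !mxtrace_sqrtmx_congr // !mxtrace_invsqrtmx_mul.
set g := \tr (N P *m invmx R *m N Q).
have -> : \tr (N Q *m invmx R *m N P) = g^*.
  by rewrite /g -mxtrace_adjmx !adjmxM adjmxV (proj1 pR) !adjmx_sqrtmx_congr // !mulmxA.
rewrite ReE mulrC divfK ?pnatr_eq0 // linearD /=.
by ring.
Qed.

End Bures.

Theorem mainTheorem2 (R : realType) (d : nat) (P Q Rm : 'M[R[i]]_d) :
  posdefmx P -> posdefmx Q -> posdefmx Rm ->
  let UP := polmx (sqrtmx P *m sqrtmx Rm) in
  let UQ := polmx (sqrtmx Q *m sqrtmx Rm) in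
  gbures Rm P Q =
    frobnorm (adjmx UP *m sqrtmx P - adjmx UQ *m sqrtmx Q) ^+ 2.
Proof. by move=> pP pQ pR UP UQ; apply: gbures_frobnorm. Qed.
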